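(* Let $L$ be an $n\times n$ nonsingular M-matrix with integer entries. If $c\in\mathbb{Z}^n$ is a critical configuration of $L$, then $D^L-c$ is $z$-superstable with respect to $L$.
   Context: A Z-matrix is a square real matrix whose off-diagonal entries are all $\le 0$. A nonsingular M-matrix is a Z-matrix $L$ that is invertible with $L^{-1}$ having all entries nonnegative (its diagonal entries are then positive). Vector inequalities are entrywise; $e_i$ is the $i$th standard basis vector. A vector $f\in\mathbb{Z}^n$ with $f\ge0$ is $z$-superstable if for every $z\in\mathbb{Z}^n$ with $z\ge0$, $z\ne0$, there is $i$ with $f_i-(Lz)_i<0$. $D^L\in\mathbb{Z}^n$ is defined by $D^L_i=L_{ii}-1$. A vector $c\in\mathbb{Z}^n$ is stable if $c_i<L_{ii}$ for all $i$. A vector $c\in\mathbb{Z}^n$ is a critical configuration if it is stable and there exist $g\in\mathbb{Z}^n$ with $g_i\ge L_{ii}$ for all $i$ and indices $i_1,\dots,i_k$ such that $c=g-\sum_{j=1}^kLe_{i_j}$ and, writing $g^\ell=g-\sum_{j=1}^\ell Le_{i_j}$ ($g^0=g$), one has $g^\ell_{i_{\ell+1}}\ge L_{i_{\ell+1}i_{\ell+1}}$ for all $0\le\ell<k$. *)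

From HB Require Import structures.
From mathcomp Require Import all_boot all_order all_algebra.
Set Implicit Arguments. Unset Strict Implicit. Unset Printing Implicit Defensive.
Import Order.TTheory GRing.Theory Num.Theory.
Local Open Scope ring_scope.

Definition Zmatrix (n : nat) (L : 'M[int]_n) : Prop :=
  forall i j : 'I_n, i != j -> L i j <= 0.

Definition nonsingular_Mmatrix (n : nat) (L : 'M[int]_n) : Prop :=
  let LQ := map_mx (intr : int -> rat) L in
  Zmatrix L /\ LQ \in unitmx /\ (forall i j : 'I_n, 0 <= invmx LQ i j).

Definition Le (n : nat) (L : 'M[int]_n) (i : 'I_n) : 'cV[int]_n := L *m delta_mx i 0.

Definition DL (n : nat) (L : 'M[int]_n) : 'cV[int]_n := \col_i (L i i - 1).

Definition stable (n : nat) (L : 'M[int]_n) (c : 'cV[int]_n) : Prop :=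
  forall i : 'I_n, c i 0 < L i i.

Fixpoint legal_fire (n : nat) (L : 'M[int]_n) (g : 'cV[int]_n) (s : seq 'I_n)
  : option 'cV[int]_n :=
  match s with
  | [::] => Some g
  | i :: s' => if L i i <= g i 0 then legal_fire L (g - Le L i) s' else None
  end.

Definition critical (n : nat) (L : 'M[int]_n) (c : 'cV[int]_n) : Prop :=
  stable L c /\
  exists (g : 'cV[int]_n) (s : seq 'I_n),
    (forall i : 'I_n, L i i <= g i 0) /\ legal_fire L g s = Some c.

Definition z_superstable (n : nat) (L : 'M[int]_n) (f : 'cV[int]_n) : Prop :=
  (forall i : 'I_n, 0 <= f i 0) /\
  forall z : 'cV[int]_n, (forall i, 0 <= z i 0) -> z != 0 ->
    exists i : 'I_n, f i 0 - (L *m z) i 0 < 0.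

(* A critical configuration arises from a configuration g >= diag(L) by a legal
   firing sequence with firing vector f, so c = g - L f.  If D^L - c were not
   z-superstable, some z >= 0, z <> 0 would make T := c + L z stable.  Then
   L (f - z) = g - T >= 0, so f - z >= 0 because L^-1 >= 0.  Replaying the firing
   sequence from g = T + L (f - z) keeps the form T + L u with u >= 0: a vertex
   that can fire has (L u)_i > 0, which for a Z-matrix forces u_i > 0.  At the end
   c = T + L u', hence L (u' + z) = 0, so u' + z = 0 and z = 0. *)
From HB Require Import structures.
From mathcomp Require Import all_boot all_order all_algebra.
Set Implicit Arguments. Unset Strict Implicit.
Import Order.TTheory GRing.Theory Num.Theory.
Local Open Scope ring_scope.

Lemma subz1_ge0 (a b : int) : (0 <= a - 1 - b) = (b < a).
Proof. by rewrite subr_ge0 lerBrDr lezD1. Qed.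

Definition nonneg (n : nat) (u : 'cV[int]_n) : Prop := forall i, 0 <= u i 0.

Definition firing_vector (n : nat) (s : seq 'I_n) : 'cV[int]_n :=
  \sum_(i <- s) delta_mx i 0.

Section Firing.

Variables (n : nat) (L : 'M[int]_n).

Lemma legal_fire_firing_vector (s : seq 'I_n) (g c : 'cV[int]_n) :
  legal_fire L g s = Some c -> c = g - L *m firing_vector s.
Proof.
elim: s g => [|i s IH] g /=.
  by case=> <-; rewrite /firing_vector big_nil mulmx0 subr0.
case: ifP => // _ /IH ->.
by rewrite /firing_vector big_cons mulmxDr /Le opprD addrA.
Qed.

Lemma Zmatrix_mulmx_le0 (u : 'cV[int]_n) (i : 'I_n) :
  Zmatrix L -> nonneg u -> u i 0 = 0 -> (L *m u) i 0 <= 0.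
Proof.
move=> LZ u_ge0 ui0; rewrite mxE; apply: sumr_le0 => j _.
have [<-|ij] := eqVneq i j; first by rewrite ui0 mulr0.
by rewrite mulr_le0_ge0 ?LZ.
Qed.

Lemma nonsingular_Mmatrix_monotone (u : 'cV[int]_n) :
  nonsingular_Mmatrix L -> nonneg (L *m u) -> nonneg u.
Proof.
move=> [_ [LQ_unit LQinv_ge0]] Lu_ge0 i.
have uQ : map_mx (intr : int -> rat) u
          = invmx (map_mx intr L) *m map_mx intr (L *m u).
  by rewrite map_mxM mulKmx.
have : 0 <= map_mx (intr : int -> rat) u i 0.
  rewrite uQ mxE; apply: sumr_ge0 => k _.
  by rewrite mulr_ge0 // mxE ler0z.
by rewrite mxE ler0z.
Qed.

Lemma unitmx_intr_mulmx_eq0 (u : 'cV[int]_n) :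
  map_mx (intr : int -> rat) L \in unitmx -> L *m u = 0 -> u = 0.
Proof.
move=> LQ_unit Lu0; apply/matrixP => i j.
have : map_mx (intr : int -> rat) u = 0.
  by rewrite -(mulKmx LQ_unit (map_mx intr u)) -map_mxM Lu0 map_mx0 mulmx0.
by move/matrixP/(_ i j); rewrite !mxE => /eqP; rewrite intr_eq0 => /eqP.
Qed.

Lemma legal_fire_residual (T u c : 'cV[int]_n) (s : seq 'I_n) :
  Zmatrix L -> stable L T -> nonneg u -> legal_fire L (T + L *m u) s = Some c ->
  exists2 u' : 'cV[int]_n, nonneg u' & c = T + L *m u'.
Proof.
move=> LZ T_stable; elim: s u => [|i s IH] u u_ge0 /=.
  by case=> <-; exists u.
case: ifP => // i_fires.
have ui_pos : 0 < u i 0.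
  rewrite lt_def (u_ge0 i) andbT; apply/eqP => /(Zmatrix_mulmx_le0 LZ u_ge0) Lu_le0.
  have := lt_le_trans (T_stable i) i_fires.
  by rewrite [(T + _) i 0]mxE ltrDl ltNge Lu_le0.
have -> : T + L *m u - Le L i = T + L *m (u - delta_mx i 0).
  by rewrite /Le mulmxBr addrA.
apply: IH => j; rewrite !mxE andbT.
by case: eqP => [->|_]; rewrite ?subr0 ?subr_ge0 ?u_ge0.
Qed.

End Firing.

Lemma nonneg_addr_eq0 (n : nat) (u v : 'cV[int]_n) :
  nonneg u -> nonneg v -> u + v = 0 -> v = 0.
Proof.
move=> u_ge0 v_ge0 /matrixP uv0; apply/matrixP => i j; rewrite (ord1 j).
by move/eqP: (uv0 i 0); rewrite !mxE paddr_eq0 // => /andP[_ /eqP].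
Qed.

Theorem mainTheorem13 (n : nat) (L : 'M[int]_n) (c : 'cV[int]_n) :
  nonsingular_Mmatrix L -> critical L c -> z_superstable L (DL L - c).
Proof.
move=> LM [c_stable [g [s [g_ge_diag fire_gc]]]].
have [LZ [LQ_unit _]] := LM.
split=> [i|z z_ge0 z_ne0]; first by rewrite !mxE subz1_ge0.
apply/existsP; apply: contraNT z_ne0 => /existsPn no_neg.
set T := c + L *m z.
have T_stable : stable L T.
  by move=> i; move: (no_neg i); rewrite -leNgt !mxE -addrA -opprD subz1_ge0.
set u := firing_vector s - z.
have g_eq : g = T + L *m u.
  by rewrite /T (legal_fire_firing_vector fire_gc) mulmxBr addrACA subrK subrr addr0.
have u_ge0 : nonneg u.
  apply: (nonsingular_Mmatrix_monotone LM) => i.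
  have -> : L *m u = g - T by rewrite g_eq addrAC subrr add0r.
  rewrite [X in 0 <= X]mxE [X in _ + X]mxE subr_ge0.
  exact/ltW/(lt_le_trans (T_stable i) (g_ge_diag i)).
rewrite g_eq in fire_gc.
have [u' u'_ge0 c_eq] := legal_fire_residual LZ T_stable u_ge0 fire_gc.
have Lu'z0 : L *m (u' + z) = 0.
  move: c_eq; rewrite /T -addrA => /(congr1 (fun v => - c + v)).
  by rewrite addNr addKr mulmxDr addrC => /esym.
by rewrite (nonneg_addr_eq0 u'_ge0 z_ge0 (unitmx_intr_mulmx_eq0 LQ_unit Lu'z0)).
Qed.
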